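(* For every $\alpha\in[0,2]$, \[ \max_{\mathbf z\in\mathcal Z} F_\alpha(\mathbf z)\;=\;\max_{\mathbf x\in\mathcal X}F_\alpha(\mathbf x), \] i.e. the integrality gap $f^{\mathrm{SO}}(\mathbf z^* )/f^{\mathrm{RSO}}(\mathbf x^* )$ between the SSA problem with optimal allocation and its relaxation equals $1$, where $F_\alpha$ is defined below.
   Context: $\mathcal U$ (users) and $\mathcal B$ (stations) are finite nonempty sets, with positive rates $r_{ub}$. $\mathcal Z=\{\mathbf z\in\mathbb Z_+^{|\mathcal U|\times|\mathcal B|}:\sum_b z_{ub}=1\ \forall u\}$ and its relaxation $\mathcal X=\{\mathbf x\in\mathbb R_+^{|\mathcal U|\times|\mathcal B|}:\sum_b x_{ub}=1\ \forall u\}$. For $\mathbf w\in\mathcal X$ (in particular $\mathbf w\in\mathcal Z$) define $F_0(\mathbf w)=\sum_{b}\max_{u} r_{ub}w_{ub}$; $F_1(\mathbf w)=\sum_{u,b} w_{ub}\big(\log r_{ub}-\log(1+\sum_{v\ne u} w_{vb})\big)$; and for $\alpha>0,\alpha\ne1$: $F_\alpha(\mathbf w)=\frac{1}{1-\alpha}\sum_{u,b} r_{ub}^{1-\alpha}w_{ub}\big(1+\sum_{v\ne u}(r_{vb}/r_{ub})^{(1-\alpha)/\alpha}w_{vb}\big)^{\alpha-1}$. $f^{\mathrm{SO}}=\max_{\mathbf z\in\mathcal Z}F_\alpha(\mathbf z)$ is the single-station association utility maximization problem with optimal station resource allocation (sum over users of $\alpha$-fair utility $U_\alpha(R)=R^{1-\alpha}/(1-\alpha)$,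 $U_1=\log$, of downlink rates), and $f^{\mathrm{RSO}}=\max_{\mathbf x\in\mathcal X}F_\alpha(\mathbf x)$ is its relaxation; $\mathbf z^*,\mathbf x^*$ denote their optimizers. *)

From HB Require Import structures.
From mathcomp Require Import all_boot all_order all_algebra.
From mathcomp Require Import all_classical all_reals all_analysis.
Set Implicit Arguments. Unset Strict Implicit. Unset Printing Implicit Defensive.
Import Order.TTheory GRing.Theory Num.Theory.
Local Open Scope ring_scope.
Local Open Scope classical_set_scope.

Section Defs.
Variables (R : realType) (U B : finType).

Definition assoc := U -> B -> R.

Definition relaxX : set assoc :=
  [set w | (forall u b, 0 <= w u b) /\ (forall u, \sum_(b : B) w u b = 1)].

Definition integZ : set assoc :=
  [set w | (forall u b, w u b \is a Num.nat) /\ (forall u, \sum_(b : B) w u b = 1)].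

Definition Falpha (r : U -> B -> R) (alpha : R) (w : assoc) : R :=
  if alpha == 0 then
    \sum_(b : B) \big[Num.max/0]_(u : U) (r u b * w u b)
  else if alpha == 1 then
    \sum_(u : U) \sum_(b : B)
       w u b * (ln (r u b) - ln (1 + \sum_(v : U | v != u) w v b))
  else
    (1 - alpha)^-1 * \sum_(u : U) \sum_(b : B)
       (powR (r u b) (1 - alpha) * w u b *
        powR (1 + \sum_(v : U | v != u)
                    powR (r v b / r u b) ((1 - alpha) / alpha) * w v b)
             (alpha - 1)).

Definition is_max (S : set R) (m : R) : Prop := S m /\ forall y, S y -> y <= m.

End Defs.

(* F_alpha is a sum over stations of a function of the column
   (w u b)_u.  Fix every row but the one of user u: as a function of a single
   entry t = w u b, the contribution of station b lies below its chord on
   [0, 1] -- for alpha = 0 it is a maximum of affine maps, otherwise the term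
   of u is linear in t and every other term is a nonnegative multiple of
   -ln s or of s^(alpha-1) / (1 - alpha), both convex on s > 0 when
   alpha <= 2, composed with the affine load s = 1 + ... + c t.  A sum of such
   functions over the simplex of rows is maximised at a vertex, so user u can
   be moved to a single station without decreasing F_alpha.  Rounding users
   one at a time bounds F_alpha on X by its values on the finitely many
   integral associations, whose maximum is therefore the maximum on X. *)

From HB Require Import structures.
From mathcomp Require Import all_boot all_order all_algebra.
From mathcomp Require Import all_classical all_reals all_analysis.
From mathcomp Require Import ring lra.
Import Order.TTheory GRing.Theory Num.Theory.
Set Implicit Arguments. Unset Strict Implicit. Unset Printing Implicit Defensive.
Local Open Scope ring_scope.
Local Open Scope classical_set_scope.

Section convexity.
Variable R : realType.
Implicit Types (f g psi : R -> R) (a b k m p t y z : R).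

Definition below_chord f := forall t, 0 <= t <= 1 -> f t <= (1 - t) * f 0 + t * f 1.

Definition affine f := forall t, f t = (1 - t) * f 0 + t * f 1.

Lemma eq_below_chord f g : f =1 g -> below_chord f -> below_chord g.
Proof. by move=> fg hf t t01; rewrite -!fg; apply: hf. Qed.

Lemma eq_affine f g : f =1 g -> affine f -> affine g.
Proof. by move=> fg hf t; rewrite -!fg; apply: hf. Qed.

Lemma affine_below_chord f : affine f -> below_chord f.
Proof. by move=> hf t _; rewrite -hf. Qed.

Lemma affine_cst k : affine (fun=> k).
Proof. by move=> t; ring. Qed.

Lemma affine_id : affine id.
Proof. by move=> t /=; ring. Qed.

Lemma affineD f g : affine f -> affine g -> affine (fun t => f t + g t).
Proof. by move=> hf hg t /=; rewrite hf hg; ring. Qed.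

Lemma affineZ k f : affine f -> affine (fun t => k * f t).
Proof. by move=> hf t; rewrite hf; ring. Qed.

Lemma affine_sum (I : Type) (s : seq I) (P : pred I) (F : I -> R -> R) :
  (forall i, affine (F i)) -> affine (fun t => \sum_(i <- s | P i) F i t).
Proof.
move=> hF; elim: s => [|i s IHs].
  by apply: (eq_affine _ (affine_cst 0)) => t; rewrite big_nil.
apply: (eq_affine (f := fun t => (if P i then F i t else 0) + \sum_(j <- s | P j) F j t)).
  by move=> t /=; rewrite big_cons; case: (P i); rewrite ?add0r.
by apply: affineD => //; case: (P i); [apply: hF | apply: affine_cst].
Qed.

Lemma below_chordD f g : below_chord f -> below_chord g -> below_chord (fun t => f t + g t).
Proof. by move=> hf hg t t01 /=; have := hf t t01; have := hg t t01; lra. Qed.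

Lemma below_chordZ k f : 0 <= k -> below_chord f -> below_chord (fun t => k * f t).
Proof.
move=> k0 hf t t01; apply: le_trans (ler_wpM2l k0 (hf t t01)) _.
by rewrite le_eqVlt; apply/predU1P; left; ring.
Qed.

Lemma below_chord_max f g :
  below_chord f -> below_chord g -> below_chord (fun t => Num.max (f t) (g t)).
Proof.
move=> hf hg t /[dup] t01 /andP[t0 t1].
have t'0 : 0 <= 1 - t by rewrite subr_ge0.
rewrite ge_max; apply/andP; split;
  [apply: le_trans (hf t t01) _ | apply: le_trans (hg t t01) _];
  by apply: lerD; apply: ler_wpM2l; rewrite // le_max lexx ?orbT.
Qed.

Lemma below_chord_sum (I : Type) (s : seq I) (P : pred I) (F : I -> R -> R) :
  (forall i, below_chord (F i)) -> below_chord (fun t => \sum_(i <- s | P i) F i t).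
Proof.
move=> hF; elim: s => [|i s IHs].
  by apply: (eq_below_chord _ (affine_below_chord (affine_cst 0))) => t; rewrite big_nil.
apply: (eq_below_chord (f := fun t => (if P i then F i t else 0) + \sum_(j <- s | P j) F j t)).
  by move=> t /=; rewrite big_cons; case: (P i); rewrite ?add0r.
apply: below_chordD => //; case: (P i); first exact: hF.
exact/affine_below_chord/affine_cst.
Qed.

Lemma below_chord_bigmax (I : Type) (s : seq I) (P : pred I) (F : I -> R -> R) :
  (forall i, below_chord (F i)) -> below_chord (fun t => \big[Num.max/0]_(i <- s | P i) F i t).
Proof.
move=> hF; elim: s => [|i s IHs].
  by apply: (eq_below_chord _ (affine_below_chord (affine_cst 0))) => t; rewrite big_nil.
case Pi: (P i); last by apply: (eq_below_chord _ IHs) => t; rewrite big_cons Pi.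
apply: (eq_below_chord (f := fun t =>
  Num.max (F i t) (\big[Num.max/0]_(j <- s | P j) F j t))); last exact: below_chord_max.
by move=> t; rewrite big_cons Pi.
Qed.

Definition convex_pos psi := forall a b t, 0 < a -> 0 < b -> 0 <= t <= 1 ->
  psi ((1 - t) * a + t * b) <= (1 - t) * psi a + t * psi b.

Lemma convex_posZ k psi : 0 <= k -> convex_pos psi -> convex_pos (fun s => k * psi s).
Proof.
move=> k0 hpsi a b t a0 b0 t01; apply: le_trans (ler_wpM2l k0 (hpsi a b t a0 b0 t01)) _.
by rewrite le_eqVlt; apply/predU1P; left; ring.
Qed.

Lemma convex_pos_cstD k psi : convex_pos psi -> convex_pos (fun s => k + psi s).
Proof. by move=> hpsi a b t a0 b0 t01; have := hpsi a b t a0 b0 t01; lra. Qed.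

Lemma convex_pos_supporting psi :
  (forall m, 0 < m -> exists c, forall y, 0 < y -> psi m + c * (y - m) <= psi y) ->
  convex_pos psi.
Proof.
move=> hsupp a b t a0 b0 /[dup] t01 /andP[t0 t1].
have m0 : 0 < (1 - t) * a + t * b by nra.
have [c hc] := hsupp _ m0.
have := ler_wpM2l (_ : 0 <= 1 - t) (hc a a0); have := ler_wpM2l t0 (hc b b0).
rewrite subr_ge0 => hb /(_ t1) ha; nra.
Qed.

Lemma convex_pos_oppln : convex_pos (fun s => - ln s).
Proof.
apply: convex_pos_supporting => m m0; exists (- m^-1) => y y0.
have ym0 : 0 < y / m by rewrite divr_gt0.
have := @le_ln1Dx R (y / m - 1); rewrite [1 + _]addrC subrK => /(_ _)/wrap[]; first lra.
rewrite ln_div ?posrE //.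
have -> : - m^-1 * (y - m) = - (y / m - 1) by field; rewrite gt_eqF.
lra.
Qed.

Lemma powR_le_Bernoulli z p : 0 < z -> 0 <= p <= 1 -> powR z p <= 1 + p * (z - 1).
Proof.
move=> z0 p01; rewrite /powR gt_eqF //.
have lnz := convex_pos_oppln ltr01 z0 p01; rewrite ln1 oppr0 mulr0 add0r in lnz.
have mid0 : 0 < (1 - p) * 1 + p * z by move: p01 => /andP[]; nra.
have -> : 1 + p * (z - 1) = (1 - p) * 1 + p * z by ring.
by rewrite -[X in _ <= X]lnK ?posrE // ler_expR; lra.
Qed.

Lemma powR_ge_Bernoulli z p : 0 < z -> p <= 0 -> 1 + p * (z - 1) <= powR z p.
Proof.
move=> z0 p0; rewrite /powR gt_eqF //; apply: le_trans (expR_ge1Dx _); rewrite lerD2l.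
apply: ler_wnM2l => //; have := @le_ln1Dx R (z - 1); rewrite [1 + _]addrC subrK; apply; lra.
Qed.

Lemma powR_ratio y m p : 0 < y -> 0 < m -> powR y p = powR m p * powR (y / m) p.
Proof. by move=> y0 m0; rewrite -powRM ?ltW ?divr_gt0 // mulrC divfK // gt_eqF. Qed.

Lemma convex_pos_powR p : p <= 0 -> convex_pos (fun s => powR s p).
Proof.
move=> p0; apply: convex_pos_supporting => m m0; exists (p * powR m p / m) => y y0.
rewrite (powR_ratio p y0 m0); have := powR_ge_Bernoulli (divr_gt0 y0 m0) p0.
move/(ler_wpM2l (powR_ge0 m p)); apply: le_trans.
by rewrite le_eqVlt; apply/predU1P; left; field; rewrite gt_eqF.
Qed.

Lemma convex_pos_NpowR p : 0 <= p <= 1 -> convex_pos (fun s => - powR s p).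
Proof.
move=> p01; apply: convex_pos_supporting => m m0; exists (- (p * powR m p / m)) => y y0.
rewrite (powR_ratio p y0 m0); have := powR_le_Bernoulli (divr_gt0 y0 m0) p01.
move/(ler_wpM2l (powR_ge0 m p)); rewrite -lerN2; apply: le_trans.
by rewrite le_eqVlt; apply/predU1P; left; field; rewrite gt_eqF.
Qed.

Lemma below_chord_comp psi g : convex_pos psi -> affine g -> 0 < g 0 -> 0 < g 1 ->
  below_chord (fun t => psi (g t)).
Proof. by move=> hpsi hg g0 g1 t t01; rewrite hg; apply: hpsi. Qed.

End convexity.

Section utility.
Variable R : realType.

(* The alpha-fair utility U_alpha(rho / s) of the rate rho shared among a load s. *)
Definition share_utility (alpha rho s : R) : R :=
  if alpha == 1 then ln rho - ln s
  else (1 - alpha)^-1 * (powR rho (1 - alpha) * powR s (alpha - 1)).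

Lemma convex_pos_share_utility alpha rho : 0 < alpha <= 2 ->
  convex_pos (share_utility alpha rho).
Proof.
move=> /andP[a0 a2]; rewrite /share_utility; case: eqP => [_|/eqP a1].
  exact/convex_pos_cstD/convex_pos_oppln.
have [alt1|agt1] := ltP alpha 1.
  have -> : (fun s => (1 - alpha)^-1 * (powR rho (1 - alpha) * powR s (alpha - 1))) =
            (fun s => ((1 - alpha)^-1 * powR rho (1 - alpha)) * powR s (alpha - 1)).
    by apply/funext => s; rewrite mulrA.
  apply: convex_posZ; last by apply: convex_pos_powR; lra.
  by rewrite mulr_ge0 ?powR_ge0 // invr_ge0; lra.
have -> : (fun s => (1 - alpha)^-1 * (powR rho (1 - alpha) * powR s (alpha - 1))) =
          (fun s => ((alpha - 1)^-1 * powR rho (1 - alpha)) * - powR s (alpha - 1)).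
  by apply/funext => s; rewrite -opprB invrN; ring.
apply: convex_posZ; last by apply: convex_pos_NpowR; apply/andP; lra.
by rewrite mulr_ge0 ?powR_ge0 // invr_ge0; lra.
Qed.

End utility.

Section vertex.
Variables (R : realType) (B : finType).

Definition unit_row (b0 : B) : B -> R := fun b => (b0 == b)%:R.

Lemma sum_unit_row b0 : \sum_b unit_row b0 b = 1.
Proof.
rewrite (bigD1 b0) //= /unit_row eqxx big1 ?addr0 // => b.
by rewrite eq_sym => /negbTE ->.
Qed.

Lemma sum_below_chord_le_vertex (Phi : B -> R -> R) (y : B -> R) :
  (forall b, below_chord (Phi b)) -> (forall b, 0 <= y b) -> \sum_b y b = 1 ->
  exists b0, \sum_b Phi b (y b) <= \sum_b Phi b (unit_row b0 b).
Proof.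
move=> hPhi y0 ysum.
have [b1 _] : exists b1 : B, true.
  case: (pickP (@predT B)) => [b1 _|B0]; first by exists b1.
  by move: ysum; rewrite big_pred0 // => /eqP; rewrite eq_sym oner_eq0.
pose gain b := Phi b 1 - Phi b 0.
have [b0 _ b0max] := @arg_maxP _ _ _ b1 xpredT gain isT.
exists b0.
have yle1 b : y b <= 1 by rewrite -ysum (bigD1 b) //= lerDl sumr_ge0.
have -> : \sum_b Phi b (unit_row b0 b) = \sum_b Phi b 0 + gain b0.
  rewrite (bigD1 b0) //= [in RHS](bigD1 b0) //= /unit_row eqxx.
  under eq_bigr => b /negbTE b0b do rewrite eq_sym b0b.
  by rewrite /gain; ring.
apply: (@le_trans _ _ (\sum_b (Phi b 0 + y b * gain b))).
  apply: ler_sum => b _; apply: le_trans (hPhi b _ _) _; first by rewrite y0 yle1.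
  by rewrite le_eqVlt; apply/predU1P; left; rewrite /gain; ring.
rewrite big_split lerD2l /=.
apply: (@le_trans _ _ (\sum_b y b * gain b0)).
  by apply: ler_sum => b _; apply: ler_wpM2l => //; apply: b0max.
by rewrite -mulr_suml ysum mul1r.
Qed.

End vertex.

Arguments unit_row {R B} b0.

Section interference.
Variables (R : realType) (U : finType).

Lemma affine_eta_with (col : U -> R) u v : affine (fun t => [eta col with u |-> t] v).
Proof. by move=> t /=; case: (v == u); [apply: affine_id | apply: affine_cst]. Qed.

Lemma below_chord_load_utility (psi : U -> R -> R) (c : U -> U -> R) (col : U -> R) u :
  (forall v, convex_pos (psi v)) -> (forall v w, 0 <= c v w) -> (forall v, 0 <= col v) ->
  below_chord (fun t => \sum_v [eta col with u |-> t] v *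
    psi v (1 + \sum_(w | w != v) c v w * [eta col with u |-> t] w)).
Proof.
move=> hpsi c0 col0; apply: below_chord_sum => v /=.
have [->|vu] := eqVneq v u.
  apply: affine_below_chord.
  apply: (eq_affine _ (affineZ (psi u (1 + \sum_(w | w != u) c u w * col w)) (@affine_id R))).
  move=> t /=; rewrite mulrC; congr (_ * psi u (1 + _)).
  by apply: eq_bigr => w /negbTE ->.
apply: below_chordZ (col0 v) _.
have load_gt0 t : 0 <= t -> 0 < 1 + \sum_(w | w != v) c v w * [eta col with u |-> t] w.
  move=> t0; rewrite ltr_pwDl // sumr_ge0 // => w _; rewrite mulr_ge0 //=.
  by case: (w == u).
apply: (below_chord_comp (hpsi v)); rewrite ?load_gt0 //.
apply: affineD; first exact: affine_cst.
by apply: affine_sum => w; apply: affineZ; apply: affine_eta_with.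
Qed.

End interference.

Section association.
Variables (R : realType) (U B : finType) (r : U -> B -> R).

Definition station_utility (alpha : R) (b : B) (col : U -> R) : R :=
  if alpha == 0 then \big[Num.max/0]_u (r u b * col u)
  else \sum_u col u * share_utility alpha (r u b)
         (1 + \sum_(v | v != u) powR (r v b / r u b) ((1 - alpha) / alpha) * col v).

Lemma Falpha_stations alpha (w : U -> B -> R) :
  Falpha r alpha w = \sum_b station_utility alpha b (fun u => w u b).
Proof.
rewrite /Falpha /station_utility /share_utility; case: ifP => // a0.
rewrite [RHS]exchange_big /=; case: eqP => [->|_].
  apply: eq_bigr => u _; apply: eq_bigr => b _.
  by under [in RHS]eq_bigr do rewrite subrr mul0r powRr0 mul1r.
rewrite mulr_sumr; apply: eq_bigr => u _; rewrite mulr_sumr; apply: eq_bigr => b _.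
by ring.
Qed.

Lemma below_chord_station_utility alpha b (col : U -> R) u :
  0 <= alpha <= 2 -> (forall v, 0 <= col v) ->
  below_chord (fun t => station_utility alpha b [eta col with u |-> t]).
Proof.
move=> /andP[a0 a2] col0; rewrite /station_utility; case: eqP => [_|/eqP an0].
  apply: (@below_chord_bigmax _ _ _ _ (fun v t => r v b * [eta col with u |-> t] v)) => v.
  exact/affine_below_chord/affineZ/affine_eta_with.
apply: (below_chord_load_utility (psi := fun v => share_utility alpha (r v b))
  (c := fun v w => powR (r w b / r v b) ((1 - alpha) / alpha))) => // [v|v w].
  by apply: convex_pos_share_utility; rewrite a2 lt_neqAle eq_sym an0 a0.
exact: powR_ge0.
Qed.

End association.

Section rounding.
Variables (R : realType) (U B : finType) (r : U -> B -> R) (alpha : R).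
Hypothesis alpha02 : 0 <= alpha <= 2.

Definition assignment (f : U -> B) : U -> B -> R := fun u => unit_row (f u).

Lemma integZ_assignment f : integZ (assignment f).
Proof. by split=> [u b|u]; [apply: natr_nat | apply: sum_unit_row]. Qed.

Lemma integZ_relaxX : @integZ R U B `<=` @relaxX R U B.
Proof. by move=> z [z_nat zsum]; split=> // u b; apply: natr_ge0. Qed.

Lemma round_user (x : U -> B -> R) u : relaxX x ->
  exists b0, relaxX [eta x with u |-> unit_row b0] /\
             Falpha r alpha x <= Falpha r alpha [eta x with u |-> unit_row b0].
Proof.
move=> [x0 xsum].
have [b0 hb0] := sum_below_chord_le_vertex
  (fun b => below_chord_station_utility r b u alpha02 (fun v => x0 v b)) (x0 u) (xsum u).
exists b0; split.
  by split=> [v b|v] /=; case: (v == u); rewrite ?ler0n ?sum_unit_row.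
have col_upd b (y : B -> R) : (fun v => [eta x with u |-> y] v b) = [eta x^~ b with u |-> y b].
  by apply/funext => v /=; case: (v == u).
have col_fix b : x^~ b = [eta x^~ b with u |-> x u b].
  by apply/funext => v /=; case: eqP => [->|].
rewrite !Falpha_stations; under eq_bigr do rewrite col_fix.
by under [X in _ <= X]eq_bigr do rewrite col_upd.
Qed.

Lemma round_users (s : seq U) (x : U -> B -> R) : relaxX x ->
  exists y, [/\ relaxX y, Falpha r alpha x <= Falpha r alpha y &
                forall u, u \in s -> exists b0, y u = unit_row b0].
Proof.
move=> hx; elim: s => [|u s [y [hy Fxy yrows]]]; first by exists x.
have [b0 [hy' Fy]] := round_user u hy.
exists [eta y with u |-> unit_row b0]; split => //; first exact: le_trans Fy.
by move=> v; rewrite inE /=; case: eqP => [_ _|_ /= /yrows]; first exists b0.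
Qed.

Lemma round_relaxX (x : U -> B -> R) : relaxX x ->
  exists f : {ffun U -> B}, Falpha r alpha x <= Falpha r alpha (assignment f).
Proof.
move=> hx; have [y [_ Fxy yrows]] := round_users (enum U) hx.
have /choice[f hf] : forall u, exists b0, y u = unit_row b0.
  by move=> u; apply: yrows; rewrite mem_enum.
exists [ffun u => f u]; suff -> : assignment [ffun u => f u] = y by [].
by apply/funext => u; rewrite /assignment ffunE hf.
Qed.

End rounding.

Arguments assignment {R U B} f.

Theorem theorem1 (R : realType) (U B : finType)
  (HU : (0 < #|U|)%N) (HB : (0 < #|B|)%N)
  (r : U -> B -> R) (Hr : forall u b, 0 < r u b)
  (alpha : R) (Ha0 : 0 <= alpha) (Ha2 : alpha <= 2) :
  exists m : R,
    is_max [set Falpha r alpha z | z in @integZ R U B] m /\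
    is_max [set Falpha r alpha x | x in @relaxX R U B] m.
Proof.
have alpha02 : 0 <= alpha <= 2 by rewrite Ha0 Ha2.
have [b1 _] := card_gt0P HB.
have [f0 _ f0max] := @arg_maxP _ _ _ [ffun=> b1] xpredT
  (fun f : {ffun U -> B} => Falpha r alpha (assignment f)) isT.
have le_max x : relaxX x -> Falpha r alpha x <= Falpha r alpha (assignment f0).
  by move=> /(round_relaxX r alpha02)[f Ff]; apply: le_trans Ff (f0max f isT).
exists (Falpha r alpha (assignment f0)); split; split.
- by exists (assignment f0); first exact: integZ_assignment.
- by move=> _ [z /integZ_relaxX hz <-]; apply: le_max.
- by exists (assignment f0); first exact/integZ_relaxX/integZ_assignment.
- by move=> _ [x hx <-]; apply: le_max.
Qed.
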